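(* Let $S\in\mathbb{R}^{2n\times 2n}$ be a symplectic matrix, i.e. $S^TJS=J$. Then there exists a P-SympNet $\Phi_h$ of degree $d\ge 2$ with $k$ layers such that $Sx=\Phi_h(x)$ for all $x\in\mathbb{R}^{2n}$. Moreover: (i) for arbitrary symplectic $S$ one can take $k\le 5n$; (ii) if $S=\begin{pmatrix}A&B\\ C&D\end{pmatrix}$ with $A,B,C,D\in\mathbb{R}^{n\times n}$ and $\det A\neq 0$, one can take $k\le 4n$; (iii) if $S=e^{hJM}$ with $M=M^T\in\mathbb{R}^{2n\times 2n}$ and $h>0$ sufficiently small, then there is such a P-SympNet with time step $h$ and $k\le 2n$.
   Context: $x=(p,q)\in\mathbb{R}^{2n}$, $J=\begin{pmatrix}0&-I\\ I&0\end{pmatrix}$. A P-SympNet of degree $d$ with $k$ layers and time step $h$ is a composition $\phi^{H_k}_h\circ\cdots\circ\phi^{H_1}_h$ where $H_i(x)=\alpha_i(w_i^Tx)$ with $w_i\in\mathbb{R}^{2n}$ and $\alpha_i(z)=\sum_{j=1}^d a_{ij}z^j$ a real univariate polynomial; each layer is the exact flow of $\dot x=J\nabla H_i(x)$, given explicitly by $\phi^{H_i}_h(x)=x+h\,\alpha_i'(w_i^Tx)\,Jw_i$. *)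

From HB Require Import structures.
From mathcomp Require Import all_boot all_order all_algebra.
From mathcomp Require Import all_classical all_reals topology normedtype sequences.
Set Implicit Arguments. Unset Strict Implicit. Unset Printing Implicit Defensive.
Import Order.TTheory GRing.Theory Num.Theory numFieldNormedType.Exports.
Local Open Scope ring_scope.

Section PSympNet.
Variable R : realType.

Definition Jmx (n : nat) : 'M[R]_(n + n) := block_mx 0 (- 1%:M) 1%:M 0.

Definition symplecticmx (n : nat) (S : 'M[R]_(n + n)) : Prop :=
  S^T *m Jmx n *m S = Jmx n.

(* A layer is a pair (alpha, w) with alpha a real univariate polynomial and
   w in R^{2n}; it acts as the explicit exact flow
   x |-> x + h alpha'(w^T x) J w. *)
Definition psn_layer (n : nat) (h : R) (l : {poly R} * 'cV[R]_(n + n))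
    (x : 'cV[R]_(n + n)) : 'cV[R]_(n + n) :=
  x + (h * (l.1)^`().[(l.2^T *m x) 0 0]) *: (Jmx n *m l.2).

(* The P-SympNet given by the list of layers [l_1; ...; l_k]:
   phi_{l_k} o ... o phi_{l_1} (layer l_1 applied first). *)
Definition psn_eval (n : nat) (h : R) (s : seq ({poly R} * 'cV[R]_(n + n)))
    (x : 'cV[R]_(n + n)) : 'cV[R]_(n + n) :=
  foldl (fun y l => psn_layer h l y) x s.

(* Each alpha_i(z) = sum_{j=1}^d a_ij z^j : degree <= d, no constant term. *)
Definition psn_degree (n : nat) (d : nat) (s : seq ({poly R} * 'cV[R]_(n + n))) : bool :=
  all (fun l : {poly R} * 'cV[R]_(n + n) => (size l.1 <= d.+1)%N && (l.1`_0 == 0)) s.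

Definition expmx (m : nat) (A : 'M[R]_m) : 'M[R]_m :=
  \matrix_(i, j) limn (fun N : nat => (\sum_(k < N) (k`!%:R)^-1 *: A ^+ k) i j).

End PSympNet.

(* A symplectic [S] is reduced to the identity by left multiplication with
   symplectic transvections [x |-> x + c w(u, x) u], where [w(x, y) = x^T J y].
   If [w(x, S x) <> 0], the transvection along [x - S x] with
   [c = w(x, S x)^-1] fixes [x] and every fixed point of [S], so [rank (S - 1)]
   drops; if [w(x, S x)] vanishes identically, one more transvection along
   [S y - y] restores the first case.  Hence [S] is a product of at most
   [2 rank (S - 1) <= 4n] transvections.  If [-1] is not an eigenvalue of [S],
   [x] can moreover be taken of the form [(S + 1) z] so that [-1] is not an
   eigenvalue of the next matrix either, giving [rank (S - 1) <= 2n]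
   transvections.  A transvection is the P-SympNet layer with
   [alpha(z) = c z^2 / (2h)] and [w = J^T u].  Finally [e^X], [X = h J M], is
   symplectic because [(e^X)^T J = J e^-X], and for small [h] it is so close
   to [1] that [-1] is not an eigenvalue. *)

From HB Require Import structures.
From mathcomp Require Import all_boot all_order all_algebra.
From mathcomp Require Import all_classical all_reals topology normedtype sequences.
From mathcomp Require Import ring lra zify.
Import Order.TTheory GRing.Theory Num.Theory numFieldNormedType.Exports.
Local Open Scope ring_scope.
Set Implicit Arguments. Unset Strict Implicit. Unset Printing Implicit Defensive.

Section SymplecticForm.
Variables (R : realType) (n : nat).
Local Notation m := (n + n)%N.
Local Notation J := (Jmx R n).
Implicit Types (x y z u : 'cV[R]_m) (S : 'M[R]_m).

Lemma trmx_Jmx : J^T = - J.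
Proof. by rewrite /Jmx tr_block_mx opp_block_mx !trmx0 !oppr0 linearN /= trmx1 opprK. Qed.

Lemma mulmx_JJ : J *m J = - 1%:M.
Proof.
rewrite /Jmx mulmx_block !(mulmx0, mul0mx, addr0, add0r, mulmx1, mul1mx, mulmxN, mulNmx).
by rewrite -!raddfN /= -scalar_mx_block.
Qed.

Lemma mulmx_trJJ : J^T *m J = 1%:M.
Proof. by rewrite trmx_Jmx mulNmx mulmx_JJ opprK. Qed.

Lemma mulmx_JtrJ : J *m J^T = 1%:M.
Proof. by rewrite trmx_Jmx mulmxN mulmx_JJ opprK. Qed.

Lemma trmx_hamiltonian_mulmx (M : 'M[R]_m) : M^T = M -> (J *m M)^T *m J = J *m - (J *m M).
Proof.
move=> M_sym; rewrite trmx_mul M_sym trmx_Jmx mulmxN mulNmx -mulmxA mulmx_JJ.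
by rewrite !mulmxN mulmxA mulmx_JJ mulNmx mulmx1 mul1mx.
Qed.

Lemma mulmx_ext (A B : 'M[R]_m) : (forall x, A *m x = B *m x) -> A = B.
Proof.
move=> AB; apply/matrixP => i j.
by have := congr1 (fun v : 'cV_m => v i 0) (AB (delta_mx j 0)); rewrite -!colE !mxE.
Qed.

Definition sform x y : R := (x^T *m J *m y) 0 0.

Lemma sformDl x y z : sform (x + y) z = sform x z + sform y z.
Proof. by rewrite /sform linearD /= !mulmxDl mxE. Qed.
Lemma sformDr x y z : sform x (y + z) = sform x y + sform x z.
Proof. by rewrite /sform !mulmxDr mxE. Qed.
Lemma sformZl a x y : sform (a *: x) y = a * sform x y.
Proof. by rewrite /sform linearZ /= -!scalemxAl mxE. Qed.
Lemma sformZr a x y : sform x (a *: y) = a * sform x y.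
Proof. by rewrite /sform -scalemxAr mxE. Qed.
Lemma sformNl x y : sform (- x) y = - sform x y.
Proof. by rewrite -scaleN1r sformZl mulN1r. Qed.
Lemma sformNr x y : sform x (- y) = - sform x y.
Proof. by rewrite -scaleN1r sformZr mulN1r. Qed.
Lemma sformBl x y z : sform (x - y) z = sform x z - sform y z.
Proof. by rewrite sformDl sformNl. Qed.
Lemma sformBr x y z : sform x (y - z) = sform x y - sform x z.
Proof. by rewrite sformDr sformNr. Qed.

Definition sformE :=
  (sformDl, sformDr, sformBl, sformBr, sformNl, sformNr, sformZl, sformZr).

Lemma sformC x y : sform y x = - sform x y.
Proof.
rewrite /sform -[in RHS](trmxK (x^T *m J *m y)) [in RHS]mxE.
by rewrite !trmx_mul trmxK trmx_Jmx mulNmx mulmxN [in RHS]mxE opprK mulmxA.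
Qed.

Lemma sformxx x : sform x x = 0.
Proof.
have /eqP := sformC x x; rewrite -subr_eq0 opprK -mulr2n mulrn_eq0 /=.
by move/eqP.
Qed.

Lemma sform_Jmx_eq0 y : sform (J *m y) y = 0 -> y = 0.
Proof.
rewrite /sform trmx_mul -(mulmxA y^T J^T J) mulmx_trJJ mulmx1 mxE => yy0.
have : \sum_j y j 0 ^+ 2 = 0.
  by rewrite -[RHS]yy0; apply: eq_bigr => k _; rewrite mxE expr2.
move/eqP; rewrite psumr_eq0 => [/allP ally|k _]; last exact: sqr_ge0.
apply/matrixP => i j; rewrite (ord1 j) mxE.
by have := ally i (mem_index_enum _); rewrite /= sqrf_eq0 => /eqP.
Qed.

Lemma sform_nondeg y : (forall x, sform x y = 0) -> y = 0.
Proof. by move=> y0; apply: sform_Jmx_eq0; apply: y0. Qed.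

Lemma sform_symplectic S x y :
  symplecticmx S -> sform (S *m x) (S *m y) = sform x y.
Proof.
move=> SJS; rewrite /sform trmx_mul !mulmxA -(mulmxA x^T S^T J).
by rewrite -(mulmxA x^T (S^T *m J) S) SJS.
Qed.

Lemma symplecticmx_sform S :
  (forall x y, sform (S *m x) (S *m y) = sform x y) -> symplecticmx S.
Proof.
move=> Sinv; apply/matrixP => i j.
have := Sinv (delta_mx i 0) (delta_mx j 0).
rewrite /sform !trmx_mul !trmx_delta !mulmxA.
by rewrite -(mulmxA _ S^T J) -(mulmxA _ (S^T *m J) S) -!rowE -!colE !mxE.
Qed.

Lemma symplecticmx_mul (A B : 'M[R]_m) :
  symplecticmx A -> symplecticmx B -> symplecticmx (A *m B).
Proof.
by move=> sA sB; apply: symplecticmx_sform => x y; rewrite -!mulmxA !sform_symplectic.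
Qed.

End SymplecticForm.

Section Transvections.
Variables (R : realType) (n : nat).
Local Notation m := (n + n)%N.
Local Notation J := (Jmx R n).
Local Notation sform := (@sform R n).
Implicit Types (x y z u : 'cV[R]_m) (S : 'M[R]_m).

Definition transvection c u : 'M[R]_m := 1%:M + c *: (u *m (u^T *m J)).

Lemma mul_transvection c u x : transvection c u *m x = x + (c * sform u x) *: u.
Proof.
rewrite /transvection mulmxDl mul1mx -scalemxAl -!mulmxA (mulmxA u^T).
by rewrite [u^T *m J *m x]mx11_scalar mul_mx_scalar scalerA.
Qed.

Lemma transvection_symplectic c u : symplecticmx (transvection c u).
Proof.
apply: symplecticmx_sform => x y; rewrite !mul_transvection !sformE sformxx.
by rewrite (sformC u x) (sformC y u); ring.
Qed.

Lemma transvectionNK c u x : transvection (- c) u *m (transvection c u *m x) = x.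
Proof.
rewrite !mul_transvection sformDr sformZr sformxx mulr0 addr0 -addrA -scalerDl.
by rewrite mulNr addrN scale0r addr0.
Qed.

Definition transvection_prod (cs : seq (R * 'cV[R]_m)) x :=
  foldl (fun y p => transvection p.1 p.2 *m y) x cs.

Definition transvection_prod_le S k := exists cs : seq (R * 'cV[R]_m),
  (size cs <= k)%N /\ forall x, S *m x = transvection_prod cs x.

Lemma transvection_prod_le_leq S k k' :
  (k <= k')%N -> transvection_prod_le S k -> transvection_prod_le S k'.
Proof. by move=> kk' [cs [cs_k csE]]; exists cs; split => //; apply: leq_trans kk'. Qed.

Lemma transvection_prod_le1 k : transvection_prod_le 1%:M k.
Proof. by exists [::]; split => // x; rewrite mul1mx. Qed.

Lemma transvection_prod_le_mull c u S k :
  transvection_prod_le (transvection c u *m S) k -> transvection_prod_le S k.+1.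
Proof.
move=> [cs [cs_k csE]]; exists (rcons cs (- c, u)); split; first by rewrite size_rcons.
move=> x; rewrite /transvection_prod foldl_rcons -/(transvection_prod cs x) -csE /=.
by rewrite -mulmxA transvectionNK.
Qed.

Lemma fixed_mx_eq1 S : (forall y, S *m y = y) -> S = 1%:M.
Proof. by move=> Sfix; apply: mulmx_ext => y; rewrite Sfix mul1mx. Qed.

Lemma mxrank_subr1_eq0 S : (\rank (S - 1%:M)%R <= 0)%N -> S = 1%:M.
Proof. by rewrite leqn0 mxrank_eq0 subr_eq0 => /eqP. Qed.

Lemma mxrank_subr1_lt S S' x :
  (forall y, S *m y = y -> S' *m y = y) -> S' *m x = x -> S *m x != x ->
  (\rank (S' - 1%:M)%R < \rank (S - 1%:M)%R)%N.
Proof.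
move=> fixSS' S'x Sx.
set K := kermx (S - 1%:M)^T; set K' := kermx (S' - 1%:M)^T.
have fixE (A : 'M[R]_m) y : (y^T <= kermx (A - 1%:M)^T)%MS = (A *m y == y).
  rewrite sub_kermx -trmx_mul -trmx0 (inj_eq (@trmx_inj _ _ _)).
  by rewrite mulmxBl mul1mx subr_eq0.
have KK' : (K <= K')%MS.
  apply/rV_subP => v /submxP [w ->].
  have : ((w *m K)^T^T <= K)%MS by rewrite trmxK submxMl.
  by rewrite fixE => /eqP /fixSS' /eqP; rewrite -fixE trmxK.
have K'K : ~~ (K' <= K)%MS.
  apply: contra Sx => K'K; rewrite -fixE; apply: submx_trans K'K.
  by rewrite fixE S'x.
have : (\rank K < \rank K')%N by rewrite (ltn_leqif (mxrank_leqif_sup KK')).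
rewrite !mxrank_ker !mxrank_tr.
have := rank_leq_row (S - 1%:M); have := rank_leq_row (S' - 1%:M); lia.
Qed.

Section Step.
Variables (S : 'M[R]_m) (x : 'cV[R]_m).
Hypotheses (S_symp : symplecticmx S) (xSx : sform x (S *m x) != 0).

Definition step_mx := transvection (sform x (S *m x))^-1 (x - S *m x) *m S.

Lemma step_symplectic : symplecticmx step_mx.
Proof. exact: symplecticmx_mul (transvection_symplectic _ _) S_symp. Qed.

Lemma step_fix : step_mx *m x = x.
Proof.
rewrite -mulmxA mul_transvection sformBl sformxx subr0 mulVf // scale1r.
by rewrite (addrC (S *m x)) subrK.
Qed.

Lemma step_fixS y : S *m y = y -> step_mx *m y = y.
Proof.
move=> Sy; have Sxy : sform (S *m x) y = sform x y by rewrite -{1}Sy sform_symplectic.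
by rewrite -mulmxA Sy mul_transvection sformBl Sxy subrr mulr0 scale0r addr0.
Qed.

Lemma step_rank_lt : (\rank (step_mx - 1%:M)%R < \rank (S - 1%:M)%R)%N.
Proof.
apply: mxrank_subr1_lt step_fixS step_fix _.
by apply: contra xSx => /eqP ->; rewrite sformxx.
Qed.

End Step.

End Transvections.

Lemma exists_common_nonroot (R : numDomainType) (p q : {poly R}) :
  p != 0 -> q != 0 -> exists t, ~~ root p t && ~~ root q t.
Proof.
move=> p0 q0; have pq0 : p * q != 0 by rewrite mulf_neq0.
pose ts := [seq i%:R | i <- iota 0 (size (p * q))] : seq R.
have /allPn[t _] : ~~ all (root (p * q)) ts.
  apply/negP => all_roots; have ts_uniq : uniq ts.
    by rewrite map_inj_uniq ?iota_uniq //; apply: (mulrIn (oner_neq0 R)).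
  by have := max_poly_roots pq0 all_roots ts_uniq; rewrite size_map size_iota ltnn.
by rewrite /root hornerM mulf_eq0 negb_or; exists t.
Qed.

Section Decomposition.
Variables (R : realType) (n : nat).
Local Notation m := (n + n)%N.
Local Notation J := (Jmx R n).
Local Notation sform := (@sform R n).
Implicit Types (a b v x y z u : 'cV[R]_m) (S : 'M[R]_m).

Lemma sform_polar S : (forall x, sform x (S *m x) = 0) ->
  forall x y, sform y (S *m x) = - sform x (S *m y).
Proof. by move=> S_iso x y; have := S_iso (x + y); rewrite mulmxDr !sformE !S_iso; lra. Qed.

Section Isotropic.
Variables (S : 'M[R]_m) (y : 'cV[R]_m).
Hypotheses (S_symp : symplecticmx S) (S_iso : forall x, sform x (S *m x) = 0).
Let u := S *m y - y.

Lemma isotropic_step_fixS z : S *m z = z -> (transvection 1 u *m S) *m z = z.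
Proof.
move=> Sz; rewrite -mulmxA Sz mul_transvection sformBl.
have -> : sform (S *m y) z = sform y z by rewrite -{1}Sz sform_symplectic.
by rewrite subrr mulr0 scale0r addr0.
Qed.

Lemma isotropic_step_sform x : sform x ((transvection 1 u *m S) *m x) = sform x u ^+ 2.
Proof.
rewrite -mulmxA mul_transvection sformDr sformZr S_iso add0r mul1r expr2.
congr (_ * _); rewrite /u sformBl sform_symplectic // (sform_polar S_iso x y).
by rewrite sformC sformBr opprK addrC.
Qed.

End Isotropic.

Lemma symplectic_transvection_prod_le r S : symplecticmx S ->
  (\rank (S - 1%:M)%R <= r)%N -> transvection_prod_le S (2 * r).
Proof.
elim: r S => [|r IH] S S_symp rk.
  by rewrite (mxrank_subr1_eq0 rk); apply: transvection_prod_le1.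
have [[x xSx] | no_x] := pselect (exists x, sform x (S *m x) != 0).
  have := IH _ (step_symplectic x S_symp) (leq_trans (step_rank_lt S_symp xSx) rk).
  by move=> /transvection_prod_le_mull; apply: transvection_prod_le_leq; lia.
have S_iso x : sform x (S *m x) = 0.
  by apply/eqP/negP => xSx; apply: no_x; exists x; apply/negP.
have [->|S_neq1] := eqVneq S 1%:M; first exact: transvection_prod_le1.
have [y Sy] : exists y, S *m y != y.
  apply/not_existsP => Sfix; move/eqP: S_neq1; apply; apply: fixed_mx_eq1 => y.
  by have /negP := Sfix y; rewrite negbK => /eqP.
set u := S *m y - y; set S1 := transvection 1 u *m S.
have S1_symp : symplecticmx S1.
  exact: symplecticmx_mul (transvection_symplectic _ _) S_symp.
set x := J *m u.
have xS1x : sform x (S1 *m x) != 0.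
  rewrite isotropic_step_sform // sqrf_eq0.
  by apply: contra Sy => /eqP /sform_Jmx_eq0 /eqP; rewrite subr_eq0.
have rk2 : (\rank (step_mx S1 x - 1%:M)%R < \rank (S - 1%:M)%R)%N.
  apply: mxrank_subr1_lt (step_fix xS1x) _ => [z Sz|].
    by apply: (step_fixS x S1_symp); apply: isotropic_step_fixS.
  by apply: contra xS1x => /eqP /(isotropic_step_fixS y S_symp) ->; rewrite sformxx.
have := IH _ (step_symplectic x S1_symp) (leq_trans rk2 rk).
move=> /transvection_prod_le_mull /transvection_prod_le_mull.
by apply: transvection_prod_le_leq; lia.
Qed.

Lemma isotropic_symplectic_sqr S : symplecticmx S ->
  (forall x, sform x (S *m x) = 0) -> forall v, S *m (S *m v) = v.
Proof.
move=> S_symp S_iso v; apply/eqP; rewrite -subr_eq0; apply/eqP/sform_nondeg => a.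
rewrite sformBr (sform_polar S_iso (S *m v) a) sform_symplectic //.
by rewrite sformC opprK sformC subrr.
Qed.

Section NoEigenvalueNeg1.
Variable S : 'M[R]_m.
Hypotheses (S_symp : symplecticmx S) (S_neg1 : forall y, S *m y = - y -> y = 0).

Lemma addmx1_unit : S + 1%:M \in unitmx.
Proof.
rewrite unitmxE unitfE -det_tr; apply/det0P => -[v v0 vS].
move/eqP: v0; apply; apply: trmx_inj; rewrite trmx0; apply: S_neg1.
have := congr1 trmx vS; rewrite trmx_mul trmxK trmx0 mulmxDl mul1mx.
by move/eqP; rewrite addr_eq0 => /eqP.
Qed.

Lemma exists_sform_neq0 : S != 1%:M -> exists z, sform z (S *m z) != 0.
Proof.
move=> S_neq1; apply/not_existsP => no_z.
have S_iso x : sform x (S *m x) = 0 by have /negP := no_z x; rewrite negbK => /eqP.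
move/eqP: S_neq1; apply; apply: fixed_mx_eq1 => v.
have : S *m (S *m v - v) = - (S *m v - v).
  by rewrite mulmxBr isotropic_symplectic_sqr // opprB.
by move/S_neg1/eqP; rewrite subr_eq0 => /eqP.
Qed.

Definition sform_poly a b : {poly R} :=
  (sform a (S *m a))%:P + (sform a (S *m b) + sform b (S *m a)) *: 'X
  + sform b (S *m b) *: 'X^2.

Lemma horner_sform_poly a b t :
  (sform_poly a b).[t] = sform (a + t *: b) (S *m (a + t *: b)).
Proof.
rewrite /sform_poly !(hornerD, hornerC, hornerZ, hornerX, hornerXn).
by rewrite mulmxDr -scalemxAr !sformE; ring.
Qed.

Lemma sform_poly_neq0 a b :
  sform a (S *m a) != 0 \/ sform b (S *m b) != 0 -> sform_poly a b != 0.
Proof.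
move=> [] Q_neq0; apply: contra Q_neq0 => /eqP Q0.
  have := congr1 (coefp 0) Q0; rewrite /= !coefD coefC !coefZ coefX coefXn coef0 /=.
  by rewrite !mulr0 !addr0 => ->.
have := congr1 (coefp 2) Q0; rewrite /= !coefD coefC !coefZ coefX coefXn coef0 /=.
by rewrite mulr0 mulr1 !add0r => ->.
Qed.

Lemma exists_sform_neq0_addmx1 : S != 1%:M ->
  exists z, sform z (S *m z) != 0 /\
            sform ((S + 1%:M) *m z) (S *m ((S + 1%:M) *m z)) != 0.
Proof.
move=> S_neq1; have [a aSa] := exists_sform_neq0 S_neq1.
set A := S + 1%:M; set b := invmx A *m a.
have Ab : A *m b = a by rewrite mulmxA mulmxV ?mul1mx // addmx1_unit.
have AbSAb : sform (A *m b) (S *m (A *m b)) != 0 by rewrite Ab.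
have [t /andP[Pt Qt]] := exists_common_nonroot
  (sform_poly_neq0 (a := a) (b := b) (or_introl aSa))
  (sform_poly_neq0 (a := A *m a) (b := A *m b) (or_intror AbSAb)).
exists (a + t *: b); move: Pt Qt; rewrite /root !horner_sform_poly.
by move=> Pt Qt; split; rewrite // mulmxDr -scalemxAr.
Qed.

Lemma step_addmx1_neg1_free z : sform z (S *m z) != 0 ->
  let x := (S + 1%:M) *m z in
  forall y, step_mx S x *m y = - y -> y = 0.
Proof.
move=> zSz x y; set c := (sform x (S *m x))^-1.
set s := S *m z; set s2 := S *m s.
have xE : x = s + z by rewrite /x mulmxDl mul1mx.
have uE : x - S *m x = z - s2.
  by rewrite xE mulmxDr -/s -/s2; apply/matrixP => i j; rewrite !mxE; ring.
rewrite /step_mx -mulmxA mul_transvection uE; set lam := c * _ => S'y.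
have yE : y = lam *: (s - z).
  apply/eqP; rewrite -subr_eq0; apply/eqP/S_neg1.
  rewrite mulmxBr -scalemxAr mulmxBr -/s2.
  have -> : S *m y = - y - lam *: (z - s2) by rewrite -S'y addrK.
  by apply/matrixP => i j; rewrite !mxE; ring.
have [lam_eq0|lam0] := eqVneq lam 0; first by rewrite yE lam_eq0 scale0r.
(* Substituting [y = lam (s - z)] into the definition of [lam] forces
   [sform x (S x) = sform (z - s2) (s2 - s)], hence [sform z (S z) = 0]. *)
have ss2 : sform s s2 = sform z s by rewrite sform_symplectic.
have sformx : sform x (S *m x) - sform (z - s2) (s2 - s) = 4%:R * sform z s.
  rewrite xE mulmxDr -/s -/s2 !sformE !sformxx (sformC s s2) ss2; ring.
have lamE : lam = c * lam * sform (z - s2) (s2 - s).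
  by rewrite {1}/lam {1}yE -scalemxAr mulmxBr -/s2 sformZr; ring.
have c_sform : c * sform (z - s2) (s2 - s) = 1.
  by apply: (mulIf lam0); rewrite mul1r [in RHS]lamE; ring.
have c0 : c != 0.
  by apply: contra_eq_neq c_sform => ->; rewrite mul0r eq_sym oner_neq0.
have /eqP : 4%:R * sform z s = 0.
  rewrite -sformx; apply/eqP; rewrite subr_eq0; apply/eqP/(mulfI c0).
  by rewrite c_sform mulVf // -invr_eq0.
by rewrite mulf_eq0 pnatr_eq0 (negPf zSz).
Qed.

End NoEigenvalueNeg1.

Lemma neg1_free_symplectic_transvection_prod_le r S : symplecticmx S ->
  (forall y, S *m y = - y -> y = 0) ->
  (\rank (S - 1%:M)%R <= r)%N -> transvection_prod_le S r.
Proof.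
elim: r S => [|r IH] S S_symp S_neg1 rk.
  by rewrite (mxrank_subr1_eq0 rk); apply: transvection_prod_le1.
have [->|S_neq1] := eqVneq S 1%:M; first exact: transvection_prod_le1.
have [z [zSz xSx]] := exists_sform_neq0_addmx1 S_symp S_neg1 S_neq1.
have := IH _ (step_symplectic _ S_symp) (step_addmx1_neg1_free S_symp S_neg1 zSz)
  (leq_trans (step_rank_lt S_symp xSx) rk).
exact: transvection_prod_le_mull.
Qed.

End Decomposition.

Section Layers.
Variables (R : realType) (n : nat).
Local Notation m := (n + n)%N.
Local Notation J := (Jmx R n).

(* A transvection is the exact flow of the quadratic Hamiltonian
   [c/(2h) (w^T x)^2] with [w = J^T u], since [J J^T = 1]. *)
Definition transvection_layer (h c : R) (u : 'cV[R]_m) : {poly R} * 'cV[R]_m :=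
  ((c / (h *+ 2)) *: 'X^2, J^T *m u).

Lemma psn_layer_transvection h c u x : h != 0 ->
  psn_layer h (transvection_layer h c u) x = transvection c u *m x.
Proof.
move=> h0; rewrite /psn_layer /transvection_layer /= mul_transvection mulmxA mulmx_JtrJ.
rewrite mul1mx trmx_mul trmxK -/(sform u x) derivZ derivXn /= !hornerE.
congr (_ + _ *: _); rewrite -[LHS]/(h * c * (h *+ 2)^-1 * (sform u x + sform u x)).
by field.
Qed.

Lemma psn_degree_transvection_layer d h c u :
  (2 <= d)%N -> psn_degree d [:: transvection_layer h c u].
Proof.
move=> d2; rewrite /psn_degree /= andbT coefZ coefXn mulr0 eqxx andbT.
by apply: leq_trans (size_scale_leq _ _) _; rewrite size_polyXn.
Qed.

Lemma transvection_prod_psn S k h d : (2 <= d)%N -> h != 0 ->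
  transvection_prod_le S k ->
  exists s : seq ({poly R} * 'cV[R]_m),
    [/\ psn_degree d s, (size s <= k)%N & forall x, S *m x = psn_eval h s x].
Proof.
move=> d2 h0 [cs [cs_k csE]]; exists (map (fun p => transvection_layer h p.1 p.2) cs).
split; last 1 first.
- move=> x; rewrite csE; elim: cs {cs_k csE} x => //= p cs IH x.
  by rewrite IH psn_layer_transvection.
- rewrite /psn_degree all_map; apply/allP => p _ /=.
  by have := psn_degree_transvection_layer h p.1 p.2 d2; rewrite /psn_degree /= andbT.
- by rewrite size_map.
Qed.

End Layers.

Lemma sum_expr_le2 (R : realFieldType) (z : R) N :
  0 <= z -> z <= 1/2 -> \sum_(e < N) z ^+ e <= 2.
Proof.
move=> z0 z_le; suff : \sum_(e < N) z ^+ e <= 2 - 2 * z ^+ N.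
  by have := exprn_ge0 N z0; lra.
elim: N => [|N IH]; first by rewrite big_ord0 expr0; lra.
rewrite big_ord_recr /= exprSr.
have : 0 <= z ^+ N * (1/2 - z) by rewrite mulr_ge0 ?exprn_ge0 // subr_ge0.
lra.
Qed.

Local Open Scope classical_set_scope.
Local Open Scope ring_scope.

Section MatrixLimits.
Variable R : realType.

Definition mx_cvg p q (A : nat -> 'M[R]_(p, q)) (A0 : 'M[R]_(p, q)) :=
  forall i j, A N i j @[N --> \oo] --> A0 i j.

Lemma mx_cvgM p q r (A : nat -> 'M[R]_(p, q)) A0 (B : nat -> 'M[R]_(q, r)) B0 :
  mx_cvg A A0 -> mx_cvg B B0 -> mx_cvg (fun N => A N *m B N) (A0 *m B0).
Proof.
move=> cvgA cvgB i j; rewrite mxE; under eq_cvg do rewrite mxE.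
apply: cvg_big => [|l _]; [exact: add_continuous | exact: cvgM].
Qed.

Lemma mx_cvg_tr p q (A : nat -> 'M[R]_(p, q)) A0 :
  mx_cvg A A0 -> mx_cvg (fun N => (A N)^T) A0^T.
Proof. by move=> cvgA i j; rewrite mxE; under eq_cvg do rewrite mxE; apply: cvgA. Qed.

Lemma mx_cvg_cst p q (A0 : 'M[R]_(p, q)) : mx_cvg (fun=> A0) A0.
Proof. by move=> i j; exact: cvg_cst. Qed.

Lemma mx_cvg_unique p q (A : nat -> 'M[R]_(p, q)) A0 A1 :
  mx_cvg A A0 -> mx_cvg A A1 -> A0 = A1.
Proof.
move=> cvgA0 cvgA1; apply/matrixP => i j.
by rewrite -(cvg_lim _ (cvgA0 i j)) // -(cvg_lim _ (cvgA1 i j)).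
Qed.

End MatrixLimits.

Section ExpPoly.
Variable R : realType.

Lemma natr_fact_neq0 e : (e`!%:R : R) != 0.
Proof. by rewrite pnatr_eq0 -lt0n fact_gt0. Qed.

Lemma norm_inv_fact_le1 e : `|(e`!%:R : R)^-1| <= 1.
Proof. by rewrite ger0_norm ?invr_ge0 // invf_le1 ?ler1n ?ltr0n ?fact_gt0. Qed.

Definition exp_poly N : {poly R} := \poly_(e < N) (e`!%:R)^-1.
Definition expN_poly N : {poly R} := \poly_(e < N) ((e`!%:R)^-1 * (-1) ^+ e).

(* Below degree [N] the product has the coefficients of [e^-z e^z = 1]:
   [sum_j (-1)^j / (j! (e-j)!) = (1 - 1)^e / e!]. *)
Lemma coef_expN_exp_poly N e :
  (e < N)%N -> (expN_poly N * exp_poly N)`_e = (e == 0%N)%:R.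
Proof.
move=> eN; rewrite coefM.
have -> : \sum_(j < e.+1) (expN_poly N)`_j * (exp_poly N)`_(e - j) =
          (e`!%:R)^-1 * \sum_(j < e.+1) ((-1) ^+ j *+ 'C(e, j)).
  rewrite mulr_sumr; apply: eq_bigr => j _; have je : (j <= e)%N by rewrite -ltnS.
  rewrite !coef_poly (leq_ltn_trans je eN) (leq_ltn_trans (leq_subr j e) eN).
  have binE : ('C(e, j)%:R * (j`!%:R * (e - j)`!%:R) : R) = e`!%:R.
    by rewrite -!natrM bin_fact.
  rewrite -mulr_natr; apply: (@mulfI _ (e`!%:R)); first exact: natr_fact_neq0.
  rewrite -binE; field; rewrite ?natr_fact_neq0 //.
  by rewrite pnatr_eq0 -lt0n bin_gt0.
have -> : \sum_(j < e.+1) ((-1) ^+ j *+ 'C(e, j)) = (1 + (-1 : R)) ^+ e.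
  by rewrite (exprDn (1:R) (-1) e); apply: eq_bigr => j _; rewrite expr1n mul1r.
by rewrite subrr expr0n; case: eqP => [->|_]; rewrite ?fact0 ?invr1 ?mulr1 ?mulr0.
Qed.

Lemma norm_coef_expN_exp_poly N e : `|(expN_poly N * exp_poly N)`_e| <= 2 ^+ e.
Proof.
rewrite coefM; apply: le_trans (ler_norm_sum _ _ _) _.
apply: le_trans (_ : \sum_(j < e.+1) (1 : R) <= _).
  apply: ler_sum => j _; rewrite normrM -[1]mulr1 !coef_poly.
  apply: ler_pM; rewrite ?normr_ge0 //; case: ifP; rewrite ?normr0 // => _.
  - by rewrite normrM normrX normrN normr1 expr1n mulr1 norm_inv_fact_le1.
  - exact: norm_inv_fact_le1.
by rewrite sumr_const card_ord -natrX ler_nat; exact: ltn_expl.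
Qed.

Lemma size_expN_exp_poly_sub1 N :
  (0 < N)%N -> (size (expN_poly N * exp_poly N - 1)%R <= N + N)%N.
Proof.
move=> N0; apply: leq_trans (size_add _ _) _; rewrite size_opp size_poly1 geq_max.
apply/andP; split; last by lia.
apply: leq_trans (size_mul_leq _ _) _; apply: leq_trans (leq_pred _) _.
by apply: leq_add; apply: size_poly.
Qed.

End ExpPoly.

Section MatrixExponential.
Variables (R : realType) (k : nat).
Local Notation M := 'M[R]_k.+1.
Implicit Types X : M.

Definition exp_psum X (N : nat) : M := \sum_(e < N) (e`!%:R)^-1 *: X ^+ e.

Lemma exp_psumE X N i j : exp_psum X N i j = \sum_(e < N) (e`!%:R)^-1 * (X ^+ e) i j.
Proof. by rewrite /exp_psum summxE; apply: eq_bigr => e _; rewrite mxE. Qed.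

Lemma expmxE X i j : expmx X i j = limn (fun N => exp_psum X N i j).
Proof. by rewrite /expmx mxE. Qed.

Lemma horner_mx_poly X N (f : nat -> R) :
  horner_mx X (\poly_(e < N) f e) = \sum_(e < N) f e *: X ^+ e.
Proof.
rewrite poly_def rmorph_sum /=; apply: eq_bigr => e _.
by rewrite linearZ /= rmorphXn /= horner_mx_X.
Qed.

Lemma exp_psum_horner X N : exp_psum X N = horner_mx X (exp_poly R N).
Proof. by rewrite horner_mx_poly. Qed.

Lemma exp_psumN_horner X N : exp_psum (- X) N = horner_mx X (expN_poly R N).
Proof.
rewrite horner_mx_poly; apply: eq_bigr => e _.
by rewrite -scaleN1r exprZn scalerA.
Qed.

Lemma trmx_expr_mulmx X (J0 : M) :
  X^T *m J0 = J0 *m - X -> forall e, (X ^+ e)^T *m J0 = J0 *m (- X) ^+ e.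
Proof.
move=> XJ0; elim=> [|e IH]; first by rewrite !expr0 trmx1 mul1mx mulmx1.
by rewrite exprS exprSr -!mulmxE trmx_mul -mulmxA XJ0 !mulmxA IH.
Qed.

Variables (X : M) (beta : R).
Hypotheses (beta_ge0 : 0 <= beta) (X_le : forall i j, `|X i j| <= beta).
Let b := k.+1%:R * beta.

Lemma b_ge0 : 0 <= b.
Proof. by rewrite mulr_ge0. Qed.

Lemma norm_expr_le e i j : `|(X ^+ e) i j| <= b ^+ e.
Proof.
elim: e i j => [|e IH] i j.
  by rewrite expr0 mxE; case: (i == j); rewrite ?normr1 ?normr0.
rewrite exprSr -mulmxE mxE; apply: le_trans (ler_norm_sum _ _ _) _.
apply: le_trans (_ : \sum_(l < k.+1) b ^+ e * beta <= _).
  by apply: ler_sum => l _; rewrite normrM; apply: ler_pM.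
by rewrite sumr_const card_ord -mulr_natr exprSr /b -mulrA (mulrC beta).
Qed.

Lemma norm_exp_term_le e i j : `|(e`!%:R)^-1 * (X ^+ e) i j| <= b ^+ e.
Proof.
by rewrite normrM -[b ^+ e]mul1r; apply: ler_pM; rewrite ?norm_inv_fact_le1 ?norm_expr_le.
Qed.

Lemma exp_psum_cvg : b < 1 -> forall i j, cvgn (fun N => exp_psum X N i j).
Proof.
move=> b_lt1 i j.
have -> : (fun N => exp_psum X N i j) = series (fun e => (e`!%:R)^-1 * (X ^+ e) i j).
  by apply/funext => N; rewrite exp_psumE seriesEord.
apply: normed_cvg; apply: (@series_le_cvg _ _ (geometric 1 b)).
- by move=> e; exact: normr_ge0.
- by move=> e; rewrite /geometric /= mul1r exprn_ge0 // b_ge0.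
- by move=> e; rewrite /geometric /= mul1r; exact: norm_exp_term_le.
by apply: is_cvg_geometric_series; rewrite ger0_norm ?b_ge0.
Qed.

Lemma norm_expmx_sub1_le : b <= 1/2 -> forall i j, `|(expmx X - 1%:M) i j| <= b *+ 2.
Proof.
move=> b_le i j; have b0 := b_ge0.
have psum_le N : `|exp_psum X N.+1 i j - (1%:M : M) i j| <= b *+ 2.
  rewrite exp_psumE big_ord_recl /= expr0 fact0 invr1 mul1r addrAC subrr add0r.
  apply: le_trans (ler_norm_sum _ _ _) _.
  apply: le_trans (_ : \sum_(e < N) b * b ^+ e <= _).
    by apply: ler_sum => e _; rewrite -exprS; exact: norm_exp_term_le.
  rewrite -mulr_sumr -[b *+ 2]mulr_natr ler_wpM2l //.
  exact: sum_expr_le2.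
have /exp_psum_cvg /(_ i j) cvg_psum : b < 1 by lra.
rewrite [(expmx X - _) i j]mxE [(- 1%:M) i j]mxE expmxE ler_norml.
have psum_near : \forall N \near \oo,
    - (b *+ 2) <= exp_psum X N i j - (1%:M : M) i j <= b *+ 2.
  near=> N; rewrite -ler_norml -(prednK (_ : 0 < N)%N) ?psum_le //.
  by near: N; exact: nbhs_infty_gt.
apply/andP; split; [rewrite lerBrDr; apply: limr_ge | rewrite lerBlDr; apply: limr_le] => //.
- by apply: filterS psum_near => N /andP[+ _]; lra.
- by apply: filterS psum_near => N /andP[_ +]; lra.
Unshelve. all: by end_near.
Qed.

Lemma norm_exp_psumN_exp_psum_sub1_le N i j : b <= 1/8 -> (0 < N)%N ->
  `|(exp_psum (- X) N *m exp_psum X N - 1%:M) i j| <= 2 * (4 * b) ^+ N.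
Proof.
move=> b_le N0; have b0 := b_ge0.
set r := expN_poly R N * exp_poly R N - 1.
have -> : exp_psum (- X) N *m exp_psum X N - 1%:M = horner_mx X r.
  by rewrite exp_psumN_horner exp_psum_horner rmorphB rmorphM /= -mulmxE -polyC1 horner_mx_C.
have -> : r = \poly_(e < N + N) r`_e.
  apply/polyP => e; rewrite coef_poly; case: ltnP => // Ne.
  by rewrite nth_default // (leq_trans (size_expN_exp_poly_sub1 R N0) Ne).
rewrite horner_mx_poly summxE; apply: le_trans (ler_norm_sum _ _ _) _.
apply: le_trans (_ : \sum_(e < N + N) (4 * b) ^+ N * (1/2) ^+ e <= _); last first.
  rewrite -mulr_sumr mulrC ler_wpM2r ?exprn_ge0 ?sum_expr_le2 //; lra.
apply: ler_sum => e _; rewrite mxE normrM.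
have [eN|Ne] := ltnP e N.
  by rewrite coefB coef_expN_exp_poly // coef1 subrr normr0 mul0r mulr_ge0 ?exprn_ge0 //; lra.
(* For [e >= N]: [(2 b)^e = (4 b)^e (1/2)^e <= (4 b)^N (1/2)^e]. *)
apply: le_trans (_ : 2 ^+ e * b ^+ e <= _).
  apply: ler_pM; rewrite ?normr_ge0 ?norm_expr_le //.
  rewrite coefB coef1 (_ : (nat_of_ord e == 0%N) = false) ?subr0; last by apply/eqP; lia.
  exact: norm_coef_expN_exp_poly.
rewrite -exprMn (_ : 2 * b = (4 * b) * (1/2)); last by field.
rewrite exprMn ler_wpM2r ?exprn_ge0 ?ler_wiXn2l //; lra.
Qed.

Lemma exp_psumN_exp_psum_cvg : b <= 1/8 ->
  mx_cvg (fun N => exp_psum (- X) N *m exp_psum X N) 1%:M.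
Proof.
move=> b_le i j; have b0 := b_ge0.
apply/subr_cvg0/norm_cvg0P.
apply: (@squeeze_cvgr _ _ _ _ (cst 0) (fun N => 2 * (4 * b) ^+ N)).
- near=> N; rewrite normr_ge0 /=.
  move: (norm_exp_psumN_exp_psum_sub1_le (N := N) i j b_le).
  rewrite [(_ - 1%:M) i j]mxE [(- 1%:M) i j]mxE; apply.
  by near: N; exact: nbhs_infty_gt.
- exact: cvg_cst.
- rewrite -(mulr0 2); apply: cvgM; first exact: cvg_cst.
  by apply: cvg_expr; rewrite ger0_norm; lra.
Unshelve. all: by end_near.
Qed.

Lemma expmx_symplectic (J0 : M) : b <= 1/8 -> X^T *m J0 = J0 *m - X ->
  (expmx X)^T *m J0 *m expmx X = J0.
Proof.
move=> b_le XJ0.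
have cvgX : mx_cvg (exp_psum X) (expmx X).
  by move=> i j; rewrite expmxE; apply: exp_psum_cvg; lra.
have psumJ N : (exp_psum X N)^T *m J0 = J0 *m exp_psum (- X) N.
  rewrite linear_sum mulmx_suml mulmx_sumr; apply: eq_bigr => e _.
  by rewrite linearZ -!scalemxAl trmx_expr_mulmx // scalemxAr.
have cvg1 := mx_cvgM (mx_cvgM (mx_cvg_tr cvgX) (mx_cvg_cst (A0 := J0))) cvgX.
have cvg2 := mx_cvgM (mx_cvg_cst (A0 := J0)) (exp_psumN_exp_psum_cvg b_le).
rewrite -[RHS]mulmx1; apply: mx_cvg_unique cvg1 _ => i j.
by under eq_cvg do rewrite psumJ -mulmxA; apply: cvg2.
Qed.

(* [sum_i |y_i|] grows by a factor at most [2 b (k+1) < 2] under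
   [e^X - 1], while [e^X y = -y] doubles it. *)
Lemma expmx_neg1_free : b <= 1/2 -> b * k.+1%:R < 1 ->
  forall y : 'cV[R]_k.+1, expmx X *m y = - y -> y = 0.
Proof.
move=> b_le bk y Xy; have b0 := b_ge0.
set mu := \sum_i `|y i 0|.
have mu0 : 0 <= mu by apply: sumr_ge0 => i _; exact: normr_ge0.
have sumD : \sum_i `|((expmx X - 1%:M) *m y) i 0| = mu *+ 2.
  rewrite mulmxBl mul1mx Xy -opprD -mulr2n -sumrMnl; apply: eq_bigr => i _.
  by rewrite mxE normrN mxE -mulr2n normrMn.
have sumD_le : \sum_i `|((expmx X - 1%:M) *m y) i 0| <= \sum_(i < k.+1) b *+ 2 * mu.
  apply: ler_sum => i _; rewrite mxE; apply: le_trans (ler_norm_sum _ _ _) _.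
  rewrite /mu mulr_sumr; apply: ler_sum => l _; rewrite normrM.
  by rewrite ler_wpM2r ?normr_ge0 ?norm_expmx_sub1_le.
have : mu *+ 2 * (1 - b * k.+1%:R) <= 0.
  move: sumD_le; rewrite sumD sumr_const card_ord -subr_le0.
  rewrite -[_ *+ k.+1]mulr_natr -[mu *+ 2]mulr_natr -[b *+ 2]mulr_natr.
  by congr (_ <= _); ring.
rewrite pmulr_lle0 ?subr_gt0 // -[mu *+ 2]mulr_natr pmulr_lle0 // => mu_le0.
have mu_eq0 : mu = 0 by apply/eqP; rewrite eq_le mu_le0 mu0.
apply/matrixP => i j; rewrite (ord1 j) mxE; apply/eqP/normr0P.
exact: (psumr_eq0P (fun l _ => normr_ge0 (y l 0)) mu_eq0).
Qed.

End MatrixExponential.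

Lemma ler_norm_entry_sum (R : realType) p q (K : 'M[R]_(p, q)) i j :
  `|K i j| <= \sum_i0 \sum_j0 `|K i0 j0|.
Proof.
rewrite (bigD1 i) //= (bigD1 j) //= -addrA lerDl.
by apply: addr_ge0; apply: sumr_ge0 => l _ //; apply: sumr_ge0 => l' _.
Qed.

Lemma expmx_hamiltonian_transvection_prod_le (R : realType) n (M : 'M[R]_(n + n)) :
  M^T = M -> exists h0 : R, 0 < h0 /\ forall h, 0 < h -> h < h0 ->
    transvection_prod_le (expmx (h *: (Jmx R n *m M))) (2 * n).
Proof.
case: n M => [|n] M M_sym.
  exists 1; split => // h _ _; exists [::]; split => // x.
  by apply/matrixP => -[].
set K := Jmx R n.+1 *m M; set al := \sum_i \sum_j `|K i j|.
set mm : R := (n + n.+1).+1%:R.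
have al0 : 0 <= al by apply: sumr_ge0 => i _; apply: sumr_ge0.
have mm1 : 1 <= mm by rewrite ler1n.
have den0 : 0 < 8 * mm ^+ 2 * al + 1 by rewrite ltr_pwDr ?mulr_ge0.
exists (8 * mm ^+ 2 * al + 1)^-1; split=> [|h h0]; first by rewrite invr_gt0.
rewrite -(ltr_pM2r den0) mulVf ?gt_eqF // => h_lt.
set X := h *: K; set b := mm * (h * al).
have X_le i j : `|X i j| <= h * al.
  by rewrite mxE normrM gtr0_norm // ler_pM2l // ler_norm_entry_sum.
have b_le : b * mm < 1/8.
  have : 0 <= h * mm ^+ 2 * al by rewrite !mulr_ge0 // ltW.
  by move: h_lt; rewrite /b expr2 mulrDr mulr1; lra.
have b_mm : b <= b * mm by rewrite ler_peMr // mulr_ge0 // mulr_ge0 // ltW.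
have XJ : X^T *m Jmx R n.+1 = Jmx R n.+1 *m - X.
  rewrite /X /K linearZ /= -scalemxAl trmx_hamiltonian_mulmx //.
  by rewrite -scalerN scalemxAr.
have ha0 : 0 <= h * al by rewrite mulr_ge0 // ltW.
apply: (@transvection_prod_le_leq _ _ _ (n.+1 + n.+1)); first by rewrite mul2n -addnn.
apply: neg1_free_symplectic_transvection_prod_le (rank_leq_row _).
- apply: (@expmx_symplectic R (n + n.+1) X (h * al) ha0 X_le (Jmx R n.+1)) => //.
  by rewrite -/mm -/b; lra.
- by apply: (@expmx_neg1_free R (n + n.+1) X (h * al) ha0 X_le); rewrite -/mm -/b; lra.
Qed.

Theorem theorem2 (R : realType) (n d : nat) (hd : (2 <= d)%N) :
  (forall (S : 'M[R]_(n + n)) (h : R), symplecticmx S -> 0 < h ->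
     exists s : seq ({poly R} * 'cV[R]_(n + n)),
       [/\ psn_degree d s, (size s <= 5 * n)%N &
           forall x : 'cV[R]_(n + n), S *m x = psn_eval h s x]) /\
  (forall (S : 'M[R]_(n + n)) (h : R), symplecticmx S -> \det (ulsubmx S) != 0 ->
     0 < h ->
     exists s : seq ({poly R} * 'cV[R]_(n + n)),
       [/\ psn_degree d s, (size s <= 4 * n)%N &
           forall x : 'cV[R]_(n + n), S *m x = psn_eval h s x]) /\
  (forall M : 'M[R]_(n + n), M^T = M ->
     exists h0 : R, 0 < h0 /\
       forall h : R, 0 < h -> h < h0 ->
         exists s : seq ({poly R} * 'cV[R]_(n + n)),
           [/\ psn_degree d s, (size s <= 2 * n)%N &
               forall x : 'cV[R]_(n + n),
                 expmx (h *: (Jmx R n *m M)) *m x = psn_eval h s x]).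
Proof.
have prod4n (S : 'M[R]_(n + n)) : symplecticmx S -> transvection_prod_le S (4 * n).
  move=> S_symp; have := symplectic_transvection_prod_le S_symp (rank_leq_row _).
  by apply: transvection_prod_le_leq; lia.
split; [|split].
- move=> S h S_symp h_gt0; apply: (transvection_prod_psn hd (lt0r_neq0 h_gt0)).
  by apply: transvection_prod_le_leq (prod4n S S_symp); lia.
- move=> S h S_symp _ h_gt0.
  exact: (transvection_prod_psn hd (lt0r_neq0 h_gt0) (prod4n S S_symp)).
move=> M M_sym; have [h0 [h0_gt0 small]] := expmx_hamiltonian_transvection_prod_le M_sym.
exists h0; split => // h h_gt0 h_lt.
exact: transvection_prod_psn hd (lt0r_neq0 h_gt0) (small h h_gt0 h_lt).
Qed.
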